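(* Let $k\ge 0$, let $G$ be an oriented graph and $S\subseteq V(G)$. Then $G$ can be derived, as a $k$-Burling graph, from a Burling tree whose top-set (for $G$) is $S$, if and only if there is a set $\mathcal S$ such that $(G,\mathcal S)$ is a $k$-sequential graph with base forest $H=G[S]$.
   Context: Oriented graphs are finite, without loops, multiple arcs or pairs of opposite arcs. In a rooted tree $T$ with root $r$, each non-root vertex $v$ has a parent $p(v)$; children, leaves, ancestors and descendants are as usual. A branch is a sequence $v_1\dots v_k$ ($k\ge0$) with $v_i$ the parent of $v_{i+1}$; it starts at $v_1$. A Burling tree is a 4-tuple $(T,r,\ell,c)$: $T$ a rooted tree with root $r$; $\ell$ assigns to each non-leaf vertex $v$ one of its children $\ell(v)$ (the last-born of $v$); $c$ assigns to every vertex $v$ that is neither the root nor a last-born the vertex-set of a (possibly empty) branch starting at $\ell(p(v))$, and $c(v)=\emptyset$ if $v$ is the root or a last-born. The oriented graph fully derived from it has vertex-set $V(T)$ and an arc $uv$ iff $v\in c(u)$; an oriented graph is derived from the Burling tree if it is an induced subgraph of the fully derived one. $G$ is derived from $T$ as a $k$-Burling graph if it is derived from $T$ and every branch of $T$ contains at most $k$ vertices of $G$. If $G$ is derived from $(T,r,\ell,c)$, the top-set of $G$ is the set of vertices $v$ of $G$ such that $v$ is the only vertex of $G$ on the branch of $T$ from $r$ to $v$. An in-tree is an oriented graph obtained from a rooted tree by orienting every edge towards the root; an in-forest is an oriented forest whose components are in-trees (possibly empty); in an in-forest every vertex that is not a sink has a unique out-neighbor. $k$-sequential graphs are pairs $(G,\mathcal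 S)$, $G$ an oriented graph and $\mathcal S$ a set of stable sets of $G$, defined recursively: the $0$-sequential graph is $(G,\{\emptyset\})$ with $G$ the empty graph. For $k\ge1$, $(G,\mathcal S)$ is $k$-sequential if it is obtained as follows: pick a (possibly empty) in-forest $H$ (the base forest); for every vertex $v$ of $H$ pick a $(k-1)$-sequential graph $(H_v,\mathcal R_v)$, these graphs being vertex-disjoint from each other and from $H$; $G$ consists of $H$, all the $H_v$, and, for every vertex $u$ of $H$ that is not a sink of $H$, with unique out-neighbor $v$ in $H$, all arcs from $u$ to a chosen set $R\in\mathcal R_v$; there are no other vertices or arcs. Finally $\mathcal S=\{\emptyset\}\cup\{\{v\}\cup R: v\in V(H), R\in\mathcal R_v\}$. *)

From mathcomp Require Import all_boot.
Set Implicit Arguments. Unset Strict Implicit. Unset Printing Implicit Defensive.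

Definition oriented (V : finType) (a : rel V) : Prop :=
  irreflexive a /\ (forall u v, a u v -> ~~ a v u).

Record btree (W : finType) := BTree {
  bt_root : W;
  bt_par  : W -> option W;   (* parent; None exactly for the root *)
  bt_last : W -> W;          (* last-born child (meaningful on non-leaves) *)
  bt_c    : W -> {set W}
}.

Section BT.
Variables (W : finType) (T : btree W).

Definition child (x y : W) : bool := bt_par T y == Some x.

Definition is_branch (s : seq W) : bool :=
  if s is x :: t then path child x t else true.

Definition is_lastborn (v : W) : Prop :=
  exists p, bt_par T v = Some p /\ bt_last T p = v.

Definition is_burling_tree : Prop :=
  [/\ bt_par T (bt_root T) = None,
      (forall w, w <> bt_root T -> bt_par T w <> None) &
      (exists h : W -> nat, forall w x, bt_par T w = Some x -> h x < h w)] /\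
  [/\
      (forall v, (exists w, bt_par T w = Some v) -> bt_par T (bt_last T v) = Some v),
      (forall v, (bt_par T v = None \/ is_lastborn v) -> bt_c T v = set0) &
      (forall v p, bt_par T v = Some p -> bt_last T p <> v ->
         exists s, [/\ is_branch s, (s = [::] \/ ohead s = Some (bt_last T p))
                     & bt_c T v = [set x in s]])].

(* G (on V with arcs a) is derived from T: an induced subgraph of the fully
   derived graph, realised through an injective map phi : V -> W. *)
Definition derived (V : finType) (a : rel V) (phi : V -> W) : Prop :=
  injective phi /\ (forall u v, a u v = (phi v \in bt_c T (phi u))).

Definition k_burling (V : finType) (a : rel V) (phi : V -> W) (k : nat) : Prop :=
  derived a phi /\
  (forall s, is_branch s -> #|[set x in s | x \in codom phi]| <= k).

Definition in_top (V : finType) (phi : V -> W) (v : V) : Prop :=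
  forall t, path child (bt_root T) t -> last (bt_root T) t = phi v ->
    forall u, phi u \in bt_root T :: t -> u = v.

End BT.

(* G[B] is an in-forest: a rooted forest (parent pointers p, acyclic by a rank
   function) with every edge oriented from a vertex to its parent. *)
Definition inforest (V : finType) (a : rel V) (B : {set V}) : Prop :=
  exists (p : V -> option V) (h : V -> nat),
    [/\ (forall u v, u \in B -> v \in B -> (a u v <-> p u = Some v)),
        (forall u v, u \in B -> p u = Some v -> v \in B) &
        (forall u v, u \in B -> p u = Some v -> h v < h u)].

(* [seqb a k X Ss B] : the induced subgraph G[X] of the ambient oriented graph
   (V, a), together with the family Ss of subsets of X, is a k-sequential graph
   whose base forest has vertex set B (for k = 0, B is empty by convention). *)
Fixpoint seqb (V : finType) (a : rel V) (k : nat) (X : {set V})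
    (Ss : {set {set V}}) (B : {set V}) : Prop :=
  match k with
  | 0 => [/\ X = set0, Ss = [set set0] & B = set0]
  | k'.+1 =>
    exists (Xf : V -> {set V}) (Rf : V -> {set {set V}}) (Rsel : V -> {set V}),
    [/\ B \subset X, inforest a B,
       (forall v, v \in B ->
          [/\ Xf v \subset X, [disjoint Xf v & B] &
              exists Bv, seqb a k' (Xf v) (Rf v) Bv]) &
       (forall v w, v \in B -> w \in B -> v <> w -> [disjoint Xf v & Xf w])] /\
    [/\
       (forall x, x \in X -> x \in B \/ exists2 v, v \in B & x \in Xf v),
       [/\ (forall u w, u \in B -> w \in B -> a u w -> Rsel u \in Rf w),
           (forall u w y, u \in B -> w \in B -> y \in Xf w ->
              (a u y <-> a u w /\ y \in Rsel u)),
           (forall u w y, u \in B -> w \in B -> y \in Xf w -> ~~ a y u) &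
           (forall v w x y, v \in B -> w \in B -> v <> w ->
              x \in Xf v -> y \in Xf w -> ~~ a x y)] &
       Ss = set0 |: [set v |: R | v in B, R in Rf v]]
  end.

(* Given the Burling tree, call a vertex of G top in a subtree if no other vertex
   of G lies above it there. The top vertices of the whole tree form the base
   forest: the set c(u) of a top vertex u is a branch starting at the last-born
   sibling of u, whose highest vertex of G is the unique top out-neighbour w of u,
   the rest of the branch lying below w. The vertices of G strictly below a top
   vertex v form H_v, which is (k-1)-sequential by induction on k, since every
   branch of that subtree extends through v; the stable sets are the vertex sets
   of the branches starting at the top of the subtree.
   Conversely, each base forest is laid out along a spine of successive
   last-borns, a vertex hanging off the spine at the height given by its rank in
   the forest, so that c(u) can run down the spine to the out-neighbour w of u and
   continue into the subtree of H_w along a branch realising the chosen set R. A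
   branch meets at most one vertex of G per level of nesting, hence at most k. *)

From mathcomp Require Import all_boot.
From mathcomp Require Import zify.
Set Implicit Arguments. Unset Strict Implicit. Unset Printing Implicit Defensive.

Section RankedTree.
Variables (W : finType) (T : btree W) (h : W -> nat).
Hypothesis rank_par : forall w x, bt_par T w = Some x -> h x < h w.
Local Notation par := (bt_par T).
Local Notation ch := (child T).

Lemma par_connect x y : par y = Some x -> connect ch x y.
Proof. by move=> E; apply: connect1; rewrite /child E. Qed.

Lemma connect_rank_le x y : connect ch x y -> h x <= h y.
Proof.
move=> /connectP[p]; elim: p x => [|z p IH] x /=; first by move=> _ ->.
move=> /andP[/eqP/rank_par hz /IH H] /H; apply: leq_trans; exact: ltnW.
Qed.

Lemma connect_rank_lt x y : connect ch x y -> x != y -> h x < h y.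
Proof.
move=> /connectP[[|z p]] /=; first by move=> _ ->; rewrite eqxx.
move=> /andP[/eqP/rank_par hz Hp] -> _; apply: leq_trans hz _.
by apply: connect_rank_le; apply/connectP; exists p.
Qed.

Lemma connect_anti x y : connect ch x y -> connect ch y x -> x = y.
Proof.
move=> Cxy Cyx; apply/eqP; apply/negPn/negP => ne.
by have := connect_rank_lt Cxy ne; rewrite ltnNge connect_rank_le.
Qed.

Lemma connect_par z y p : connect ch z y -> z != y -> par y = Some p -> connect ch z p.
Proof.
move=> /connectP[q]; elim/last_ind: q => [|q x _] /=; first by move=> _ -> /eqP.
rewrite rcons_path last_rcons => /andP[Hq /eqP Hx] -> _; rewrite Hx => -[<-].
by apply/connectP; exists q.
Qed.

Lemma connect_par_first x y : connect ch x y -> x != y ->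
  exists b, par b = Some x /\ connect ch b y.
Proof.
move=> /connectP[[|b p]] /=; first by move=> _ ->; rewrite eqxx.
by move=> /andP[/eqP hb Hp] -> _; exists b; split=> //; apply/connectP; exists p.
Qed.

Lemma par_not_connect x y : par y = Some x -> ~~ connect ch y x.
Proof. by move=> E; apply/negP => /connect_rank_le; rewrite leqNgt rank_par. Qed.

Lemma path_connect_head b t x : path ch b t -> x \in b :: t -> connect ch b x.
Proof. by move=> Hp Hx; apply: (path_connect Hp). Qed.

Lemma path_connect_last b t x : path ch b t -> x \in b :: t -> connect ch x (last b t).
Proof.
elim: t b x => [|c t IH] b x /=.
  by move=> _; rewrite inE => /eqP ->; exact: connect0.
move=> /andP[hc Hp]; rewrite inE => /orP[/eqP->|Hx]; last exact: IH.
exact: connect_trans (connect1 hc) (IH _ _ Hp (mem_head _ _)).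
Qed.

Lemma path_head_notin x t : path ch x t -> x \notin t.
Proof.
case: t => [|b t] //= /andP[/eqP Hb Hp]; apply/negP => /(path_connect_head Hp).
by apply/negP; apply: par_not_connect.
Qed.

Lemma path_ancestor b t x z : path ch b t -> x \in b :: t -> connect ch z x ->
  z \in b :: t \/ connect ch z b.
Proof.
elim: t b => [|c t IH] b /=; first by move=> _; rewrite inE => /eqP ->; right.
move=> /andP[hc Hp]; rewrite inE => /orP[/eqP->|Hx] Hz; first by right.
case: (IH c Hp Hx Hz) => [H|H]; first by left; rewrite inE H orbT.
case: (eqVneq z c) => [->|ne]; first by left; rewrite !inE eqxx orbT.
by right; apply: connect_par H ne _; apply/eqP.
Qed.

Lemma connect_total_ancestors x y z :
  connect ch x z -> connect ch y z -> connect ch x y \/ connect ch y x.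
Proof.
move=> Hx /connectP[p Hp Ez]; rewrite Ez in Hx.
case: (path_ancestor Hp (mem_last y p) Hx) => [H|H]; last by left.
by right; exact: path_connect_head Hp H.
Qed.

Lemma path_split_at b t x : path ch b t -> x \in b :: t ->
  exists t1 t2, [/\ b :: t = t1 ++ x :: t2, path ch x t2 &
                    forall z, z \in t1 -> connect ch z x].
Proof.
elim: t b => [|c t IH] b /=.
  by move=> _; rewrite inE => /eqP ->; exists [::], [::].
move=> /andP[hc Hp]; rewrite inE => /orP[/eqP->|Hx].
  by exists [::], (c :: t); rewrite /= hc Hp.
have [t1 [t2 [E P2 A]]] := IH c Hp Hx.
exists (b :: t1), t2; split=> //; first by rewrite E.
move=> z; rewrite inE => /orP[/eqP->|Hz]; last exact: A.
apply: connect_trans (connect1 hc) (path_connect_head Hp _).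
by rewrite E mem_cat inE eqxx orbT.
Qed.

Lemma connect_root w : par (bt_root T) = None ->
  (forall w, w <> bt_root T -> par w <> None) -> connect ch (bt_root T) w.
Proof.
move=> Hr Hn; elim: {w}(h w).+1 {-2}w (ltnSn (h w)) => // n IH w hw.
case: (eqVneq w (bt_root T)) => [->|ne]; first exact: connect0.
case E: (par w) => [p|]; last by case: (Hn w (elimN eqP ne)).
apply: connect_trans (IH p _) (par_connect E).
by have := rank_par E; lia.
Qed.

Definition depth x := #|[set z | connect ch z x]|.

Lemma depth_max x : depth x <= #|W|.
Proof. exact: max_card. Qed.

Lemma depth_par x q : par x = Some q -> depth x = (depth q).+1.
Proof.
move=> E; rewrite /depth.
have -> : [set z | connect ch z x] = x |: [set z | connect ch z q].
  apply/setP=> z; rewrite !inE; case: (eqVneq z x) => [->|ne] /=; first exact: connect0.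
  apply/idP/idP => H; first exact: connect_par H ne E.
  exact: connect_trans H (par_connect E).
rewrite cardsU1 inE; case: (boolP (connect ch x q)) => // /connect_rank_le.
by rewrite leqNgt rank_par.
Qed.

Lemma depth_lt x y : connect ch x y -> x != y -> depth x < depth y.
Proof.
move=> H ne; apply: proper_card; apply/properP; split.
  by apply/subsetP=> z; rewrite !inE => Hz; exact: connect_trans Hz H.
exists y; rewrite !inE ?connect0 //; apply/negP => H2.
by move/eqP: ne; apply; apply: connect_anti.
Qed.

End RankedTree.

Lemma card_codom_mem (V W : finType) (phi : V -> W) (s : seq W) : injective phi ->
  #|[set x in s | x \in codom phi]| = #|[set y | phi y \in s]|.
Proof.
move=> phi_inj; rewrite -(card_imset _ phi_inj); apply: eq_card => x; rewrite [LHS]inE.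
apply/andP/imsetP => [[Hx /codomP[y Ey]]|[y Hy ->]]; last by rewrite inE in Hy; rewrite codom_f.
by exists y; rewrite // inE -Ey.
Qed.

Section BurlingToSequential.
Variables (V W : finType) (a : rel V) (T : btree W) (phi : V -> W) (h : W -> nat).
Local Notation par := (bt_par T).
Local Notation ch := (child T).
Local Notation root := (bt_root T).
Local Notation lastborn := (bt_last T).
Hypothesis rank_par : forall w x, par w = Some x -> h x < h w.
Hypothesis par_root : par root = None.
Hypothesis par_lastborn :
  forall v, (exists w, par w = Some v) -> par (lastborn v) = Some v.
Hypothesis c_empty : forall v, (par v = None \/ is_lastborn T v) -> bt_c T v = set0.
Hypothesis c_branch : forall v p, par v = Some p -> lastborn p <> v ->
  exists s, [/\ is_branch T s, (s = [::] \/ ohead s = Some (lastborn p))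
              & bt_c T v = [set x in s]].
Hypothesis phi_inj : injective phi.
Hypothesis arcE : forall u v, a u v = (phi v \in bt_c T (phi u)).

Lemma arc_branch u v : a u v -> exists p t,
  [/\ par (phi u) = Some p, par (lastborn p) = Some p, path ch (lastborn p) t,
      phi v \in lastborn p :: t & bt_c T (phi u) = [set x in lastborn p :: t]].
Proof.
rewrite arcE => Hv.
have c_nonempty : bt_c T (phi u) != set0 by apply/set0Pn; exists (phi v).
case E: (par (phi u)) => [p|].
  case: (eqVneq (lastborn p) (phi u)) => [e|ne].
    by rewrite c_empty ?eqxx in c_nonempty => //; right; exists p.
  have [s [Bs Hs Ec]] := c_branch E (elimN eqP ne).
  case: Hs => [Es|]; first by rewrite Ec Es inE in Hv.
  case: s Bs Ec => [|x t] //= Bs Ec [Ex]; subst x.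
  exists p, t; split=> //; last by rewrite Ec inE in Hv.
  by apply: par_lastborn; exists (phi u).
by rewrite c_empty ?eqxx in c_nonempty => //; left.
Qed.

Lemma lastborn_no_arc v z : is_lastborn T (phi v) -> ~~ a v z.
Proof. by move=> L; rewrite arcE c_empty ?inE //; right. Qed.

(* A region is [r = None], the whole tree, or [r = Some p], the strict
   descendants of [p]; its start vertices are the root, resp. the children of [p]. *)
Definition region_start (r : option W) b :=
  if r is Some p then par b == Some p else b == root.
Definition in_region r y := [exists b, region_start r b && connect ch b y].
Definition region r := [set x | in_region r (phi x)].
Definition region_top r := [set x in region r |
  [forall y in region r, connect ch (phi y) (phi x) ==> (y == x)]].
Definition below v := region (Some (phi v)).
Definition region_branch r (s : seq W) :=
  if s is b :: t then region_start r b && path ch b t else true.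
Definition vertices_on (s : seq W) := [set y | phi y \in s].

Lemma in_regionP r y :
  reflect (exists2 b, region_start r b & connect ch b y) (in_region r y).
Proof.
apply: (iffP existsP) => [[b /andP[]]|[b H1 H2]]; first by exists b.
by exists b; rewrite H1.
Qed.

Lemma region_branch_Some p s : region_branch (Some p) s = path ch p s.
Proof. by case: s. Qed.

Lemma region_start_anti r b b' :
  region_start r b -> region_start r b' -> connect ch b' b -> b' = b.
Proof.
case: r => [p|] /= => [/eqP Hb /eqP Hb' C|/eqP -> /eqP -> //].
case: (eqVneq b' b) => // ne.
have /connect_rank_le := connect_par C ne Hb; rewrite -/ch => /(_ _ rank_par).
by rewrite leqNgt rank_par.
Qed.

Lemma in_region_connect r x y : in_region r x -> connect ch x y -> in_region r y.
Proof.
move=> /in_regionP[b Hb C] C2; apply/in_regionP; exists b => //.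
exact: connect_trans C C2.
Qed.

Lemma in_region_sibling r u p v :
  in_region r u -> par u = Some p -> par v = Some p -> in_region r v.
Proof.
move=> /in_regionP[b Hb C] Eu Ev; apply/in_regionP.
case: (eqVneq b u) => [ebu|ne]; last first.
  by exists b => //; exact: connect_trans (connect_par C ne Eu) (par_connect Ev).
case: r Hb => [q|] /= /eqP Hb; last by rewrite -ebu Hb par_root in Eu.
by exists v => //=; rewrite Ev -Eu -ebu Hb.
Qed.

Lemma in_region_Some p y : in_region (Some p) y = connect ch p y && (p != y).
Proof.
apply/idP/idP.
  move=> /in_regionP[b /= /eqP Hb C]; rewrite (connect_trans (par_connect Hb) C) /=.
  apply/eqP => e; rewrite -e in C.
  by have := connect_rank_le rank_par C; rewrite leqNgt rank_par.
move=> /andP[C ne]; have [b [Hb Cb]] := connect_par_first C ne.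
by apply/in_regionP; exists b => //=; rewrite Hb.
Qed.

Lemma belowE v y : (y \in below v) = connect ch (phi v) (phi y) && (v != y).
Proof. by rewrite inE in_region_Some (inj_eq phi_inj). Qed.

Lemma region_topP r x : reflect
  (x \in region r /\ forall y, y \in region r -> connect ch (phi y) (phi x) -> y = x)
  (x \in region_top r).
Proof.
rewrite /region_top in_set; apply: (iffP andP) => -[Hx H]; split=> //.
  by move=> y Hy C; have := forallP H y; rewrite Hy C => /eqP.
by apply/forall_inP => y Hy; apply/implyP => /(H y Hy)/eqP.
Qed.

Lemma region_top_sub r : region_top r \subset region r.
Proof. by apply/subsetP => x /region_topP[]. Qed.

Lemma region_top_comparable r v w y :
  v \in region_top r -> w \in region_top r ->
  connect ch (phi v) y -> connect ch (phi w) y -> v = w.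
Proof.
move=> /region_topP[Xv Tv] /region_topP[Xw Tw] Cv Cw.
by case: (connect_total_ancestors Cv Cw) => C; [exact: Tw | symmetry; exact: Tv].
Qed.

Lemma below_subset r v : v \in region r -> below v \subset region r.
Proof.
move=> Hv; apply/subsetP => y; rewrite belowE inE => /andP[C _].
by apply: in_region_connect C; rewrite inE in Hv.
Qed.

Lemma below_disjoint_top r v : v \in region_top r -> [disjoint below v & region_top r].
Proof.
move=> /region_topP[Hv _]; rewrite -setI_eq0; apply/eqP/setP => y.
rewrite in_setI in_set0 belowE; apply/negbTE/negP => /andP[/andP[C ne]].
by move=> /region_topP[_ /(_ v Hv C) e]; rewrite e eqxx in ne.
Qed.

Lemma below_disjoint r v w : v \in region_top r -> w \in region_top r -> v <> w ->
  [disjoint below v & below w].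
Proof.
move=> Hv Hw nvw; rewrite -setI_eq0; apply/eqP/setP => y; rewrite in_setI in_set0 !belowE.
apply/negbTE/negP => /andP[/andP[Cv _] /andP[Cw _]].
exact: nvw (region_top_comparable Hv Hw Cv Cw).
Qed.

Lemma region_cover r x : x \in region r ->
  x \in region_top r \/ exists2 v, v \in region_top r & x \in below v.
Proof.
move=> Hx; case: (boolP (x \in region_top r)) => HB; [by left | right].
pose P y := [&& y \in region r, connect ch (phi y) (phi x) & y != x].
have [y0 Py0] : exists y, P y.
  move: HB; rewrite inE Hx /= => /forallPn [y]; rewrite !negb_imply => /and3P[Hy C ne].
  by exists y; rewrite /P Hy C ne.
case: (arg_minnP (fun y => h (phi y)) Py0) => v /and3P[Hv Cv nev] vmin.
exists v; last by rewrite belowE Cv nev.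
apply/region_topP; split=> // z Hz Cz; apply/eqP/negPn/negP => nzv.
have nzx : z != x.
  apply/eqP => ezx; subst z.
  by move: nev; rewrite (phi_inj (connect_anti rank_par Cz Cv)) eqxx.
have Pz : P z by rewrite /P Hz (connect_trans Cz Cv) nzx.
have := connect_rank_lt rank_par Cz; rewrite (inj_eq phi_inj) => /(_ nzv).
by rewrite ltnNge vmin.
Qed.

Lemma region_top_out_uniq r u w1 w2 : w1 \in region_top r -> w2 \in region_top r ->
  a u w1 -> a u w2 -> w1 = w2.
Proof.
move=> H1 H2 A1 A2; have [p [t [_ _ Hp Hw1 Ec]]] := arc_branch A1.
have Hw2 : phi w2 \in lastborn p :: t by move: A2; rewrite arcE Ec inE.
exact: region_top_comparable H1 H2 (path_connect_last Hp Hw1) (path_connect_last Hp Hw2).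
Qed.

(* The in-forest rank decreases along an arc [u -> w] of the top: [phi w] lies on
   the branch from the last-born sibling of [phi u], so it is at least as deep as
   [phi u], and equally deep only when it is that last-born, hence a sink. *)
Lemma region_top_inforest r : inforest a (region_top r).
Proof.
pose B := region_top r.
pose out u := [pick w in B | a u w].
pose rank u := 2 * (#|W| - depth T (phi u)) + isSome (out u).
have outP u w : w \in B -> (a u w <-> out u = Some w).
  move=> Hw; rewrite /out; case: pickP => [w' /andP[Hw' A']|H0]; last first.
    by split=> // A; move: (H0 w); rewrite Hw A.
  split=> [A|[<-] //]; congr Some; exact: region_top_out_uniq Hw' Hw A' A.
exists out, rank; split.
- by move=> u w _ Hw; exact: outP.
- by move=> u w _; rewrite /out; case: pickP => [w' /andP[Hw _] [<-]|].
move=> u v _ E; have Bv : v \in B.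
  by move: E; rewrite /out; case: pickP => [w /andP[Hw _] [<-]|].
have A := (outP u v Bv).2 E.
have [p [t [E1 E2 Hp Hv Ec]]] := arc_branch A.
have Dl : depth T (lastborn p) = depth T (phi u).
  by rewrite (depth_par rank_par E2) (depth_par rank_par E1).
have Dv := depth_max T (phi v).
rewrite /rank E; set N := #|W| in Dv *; case: (eqVneq (phi v) (lastborn p)) => e.
  have -> : out v = None.
    rewrite /out; case: pickP => // w /andP[_].
    by rewrite (negbTE (lastborn_no_arc w _)) //; exists p; rewrite e.
  by rewrite e Dl /=; lia.
rewrite eq_sym in e; have := depth_lt rank_par (path_connect_head Hp Hv) e.
by case: (out v) => [?|] /=; lia.
Qed.

Lemma arc_strict_ancestor x y z :
  a x y -> connect ch z (phi x) -> z != phi x -> connect ch z (phi y).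
Proof.
move=> /arc_branch[p [t [E1 E2 Hp Hy _]]] Cz nz.
apply: connect_trans (connect_par Cz nz E1) _.
exact: connect_trans (par_connect E2) (path_connect_head Hp Hy).
Qed.

Lemma arc_not_to_ancestor x y :
  a x y -> connect ch (phi y) (phi x) -> phi y = phi x.
Proof.
move=> /arc_branch[p [t [E1 E2 Hp Hy _]]] C; apply/eqP/negPn/negP => ne.
have Cp := connect_trans (path_connect_head Hp Hy) (connect_par C ne E1).
by have := par_not_connect rank_par E2; rewrite Cp.
Qed.

Lemma top_arc_below r u w y : u \in region_top r -> w \in region_top r ->
  y \in below w -> a u y -> a u w.
Proof.
move=> /region_topP[_ Tu] /region_topP[Xw _] Hy A.
have [p [t [E1 E2 Hp Hy' Ec]]] := arc_branch A.
move: Hy; rewrite belowE => /andP[Cwy _].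
rewrite arcE Ec inE; case: (path_ancestor Hp Hy' Cwy) => // Cw.
case: (eqVneq (phi w) (lastborn p)) => [->|ne]; first exact: mem_head.
have Cwp := connect_par Cw ne E2.
have e := Tu w Xw (connect_trans Cwp (par_connect E1)); subst w.
by have := par_not_connect rank_par E1; rewrite Cwp.
Qed.

Lemma below_no_arc_top r u w y : u \in region_top r -> w \in region_top r ->
  y \in below w -> ~~ a y u.
Proof.
move=> /region_topP[_ Tu] /region_topP[Xw _] Hy; apply/negP => A.
move: Hy; rewrite belowE => /andP[Cwy nwy].
have nwy' : phi w != phi y by rewrite (inj_eq phi_inj).
have e := Tu w Xw (arc_strict_ancestor A Cwy nwy'); subst w.
by move/eqP: nwy'; apply; exact: arc_not_to_ancestor A Cwy.
Qed.

Lemma below_no_arc_below r v w x y : v \in region_top r -> w \in region_top r -> v <> w ->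
  x \in below v -> y \in below w -> ~~ a x y.
Proof.
move=> Hv Hw nvw; rewrite !belowE => /andP[Cvx nvx] /andP[Cwy _]; apply/negP => A.
have nvx' : phi v != phi x by rewrite (inj_eq phi_inj).
exact: nvw (region_top_comparable Hv Hw (arc_strict_ancestor A Cvx nvx') Cwy).
Qed.

Lemma top_arc_rest r u w : u \in region_top r -> w \in region_top r -> a u w ->
  exists2 s, region_branch (Some (phi w)) s &
    [set y | a u y] :\: region_top r = vertices_on s.
Proof.
move=> Hu Hw A; have [p [t [E1 E2 Hp Hw' Ec]]] := arc_branch A.
have [t1 [t2 [Es Hp2 Anc]]] := path_split_at Hp Hw'.
have /region_topP[Xu _] := Hu; have /region_topP[Xw Tw] := Hw.
have RL : in_region r (lastborn p) by apply: in_region_sibling E1 E2; rewrite inE in Xu.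
exists t2; first by rewrite region_branch_Some.
apply/setP => y; rewrite in_setD [y \in vertices_on _]inE; apply/andP/idP.
  move=> [nB]; rewrite inE arcE Ec inE Es mem_cat in_cons => /or3P[H|/eqP e|//].
    have Xy : y \in region r.
      rewrite inE; apply: in_region_connect RL (path_connect_head Hp _).
      by rewrite Es mem_cat H.
    by move: nB; rewrite (Tw y Xy (Anc _ H)) Hw.
  by move: nB; rewrite (phi_inj e) Hw.
move=> Ht2; split; last by rewrite inE arcE Ec inE Es mem_cat in_cons Ht2 !orbT.
have Hy : y \in below w.
  rewrite belowE (path_connect_head Hp2 _) ?inE ?Ht2 ?orbT //=.
  by apply/eqP => e; have := path_head_notin rank_par Hp2; rewrite e Ht2.
by rewrite (disjointFr (below_disjoint_top Hw) Hy).
Qed.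

Lemma region_branch_split r s : region_branch r s ->
  vertices_on s = set0 \/ exists v s', [/\ v \in region_top r,
    region_branch (Some (phi v)) s' & vertices_on s = v |: vertices_on s'].
Proof.
case: s => [|b t] /=; first by left; apply/setP => y; rewrite !inE.
move=> /andP[Hb Ht].
case: (pickP (fun y => phi y \in b :: t)) => [y0 Py0|none]; last first.
  by left; apply/setP => y; rewrite in_set0 in_set none.
right; have [v Pv vmin] := arg_minnP (P := fun y => phi y \in b :: t) (fun y => h (phi y)) Py0.
have Xv : v \in region r.
  by rewrite inE; apply/in_regionP; exists b => //; exact: path_connect_head Ht Pv.
have lowest z : phi z \in b :: t -> connect ch (phi z) (phi v) -> z = v.
  move=> Pz Cz; apply/eqP/negPn/negP => nzv.
  have := connect_rank_lt rank_par Cz; rewrite (inj_eq phi_inj) => /(_ nzv).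
  by rewrite ltnNge vmin.
have Bv : v \in region_top r.
  apply/region_topP; split=> // z Hz Cz; apply: lowest (Cz).
  case: (path_ancestor Ht Pv Cz) => // Czb.
  move: Hz; rewrite inE => /in_regionP[b' Hb' Cb'].
  have eb := region_start_anti Hb Hb' (connect_trans Cb' Czb); subst b'.
  by rewrite (connect_anti rank_par Czb Cb') mem_head.
have [t1 [t2 [Es Hp2 above]]] := path_split_at Ht Pv.
exists v, t2; split=> //; first by rewrite region_branch_Some.
apply/setP => y; rewrite in_setU1 !in_set Es mem_cat in_cons (inj_eq phi_inj).
case: (eqVneq y v) => [->|nyv] /=; first by rewrite orbT.
case: (boolP (phi y \in t1)) => Ht1 //=.
have Py : phi y \in b :: t by rewrite Es mem_cat Ht1.
by rewrite (lowest y Py (above _ Ht1)) eqxx in nyv.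
Qed.

Lemma region_branch_below r v s : v \in region r -> region_branch (Some (phi v)) s ->
  exists2 s0, region_branch r s0 & #|vertices_on s| < #|vertices_on s0|.
Proof.
rewrite inE region_branch_Some => /in_regionP[b Hb /connectP[p Hp E]] Hs.
exists (b :: p ++ s); first by rewrite /= Hb cat_path Hp -E Hs.
apply: proper_card; apply/properP; split.
  by apply/subsetP => y; rewrite !inE mem_cat => ->; rewrite !orbT.
exists v; rewrite !inE; last by have := path_head_notin rank_par Hs.
by rewrite -in_cons -cat_cons mem_cat E mem_last.
Qed.

Lemma region_empty r :
  (forall s, region_branch r s -> #|vertices_on s| <= 0) -> region r = set0.
Proof.
move=> bound; apply/setP => x; rewrite in_set0 inE.
apply/negbTE/negP => /in_regionP[b Hb /connectP[t Ht E]].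
have := bound (b :: t); rewrite /= Hb Ht leqn0 cards_eq0 => /(_ isT) /eqP/setP/(_ x).
by rewrite in_set0 inE E mem_last.
Qed.

Lemma region_sequential k r :
  (forall s, region_branch r s -> #|vertices_on s| <= k) ->
  exists Ss, seqb a k (region r) Ss (region_top r) /\
    forall s, region_branch r s -> vertices_on s \in Ss.
Proof.
elim: k r => [|k IH] r bound.
  have R0 := region_empty bound.
  exists [set set0]; split.
    split=> //; apply/eqP; rewrite -subset0 -R0; exact: region_top_sub.
  by move=> s /bound; rewrite leqn0 cards_eq0 => /eqP ->; rewrite inE.
have /fin_all_exists[Rf HRf] v : exists R, v \in region r ->
    seqb a k (below v) R (region_top (Some (phi v))) /\
    forall s, region_branch (Some (phi v)) s -> vertices_on s \in R.
  case: (boolP (v \in region r)) => Hv; last by exists set0.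
  have [|R HR] := IH (Some (phi v)); last by exists R.
  move=> s /(region_branch_below Hv)[s0 /bound Hs0 lt].
  by rewrite -ltnS (leq_trans lt Hs0).
pose B := region_top r.
have topX v : v \in B -> v \in region r by apply/subsetP/region_top_sub.
exists (set0 |: [set v |: R | v in B, R in Rf v]); split; last first.
  move=> s /region_branch_split [->|[v [s' [Hv Hs' ->]]]]; first by rewrite setU11.
  by apply/setU1P; right; apply: imset2_f => //; exact: (HRf v (topX v Hv)).2.
exists below, Rf, (fun u => [set y | a u y] :\: B); split; first split.
- exact: region_top_sub.
- exact: region_top_inforest.
- move=> v Hv; split; [exact: below_subset (topX v Hv) | exact: below_disjoint_top |].
  by exists (region_top (Some (phi v))); exact: (HRf v (topX v Hv)).1.
- exact: below_disjoint.
split=> //; first exact: region_cover.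
split.
- move=> u w Hu Hw /(top_arc_rest Hu Hw)[s Hs ->].
  exact: (HRf w (topX w Hw)).2.
- move=> u w y Hu Hw Hy; rewrite in_setD inE (disjointFr (below_disjoint_top Hw) Hy).
  by split=> [A|[]] //; split=> //; exact: top_arc_below Hu Hw Hy A.
- exact: below_no_arc_top.
- exact: below_no_arc_below.
Qed.

Lemma region_root : (forall w, connect ch root w) -> region None = [set: V].
Proof.
by move=> Croot; apply/setP => x; rewrite !inE; apply/in_regionP; exists root => /=.
Qed.

Lemma region_top_root v :
  (forall w, connect ch root w) -> v \in region_top None <-> in_top T phi v.
Proof.
move=> Croot; have inX y : y \in region None by rewrite (region_root Croot) inE.
split.
  move=> /region_topP[_ Tv] t Hp El u Hu.
  by apply: Tv => //; rewrite -El; exact: path_connect_last Hp Hu.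
move=> Tv; apply/region_topP; split=> // y _ C.
have /connectP[t Hp El] := Croot (phi v).
apply: (Tv t Hp (esym El)); rewrite El in C.
case: (path_ancestor Hp (mem_last _ _) C) => // C2.
by rewrite (connect_anti rank_par C2 (Croot _)) mem_head.
Qed.

End BurlingToSequential.

Lemma burling_sequential k (V : finType) (a : rel V) (S : {set V}) :
  (exists (W : finType) (T : btree W) (phi : V -> W),
      [/\ is_burling_tree T, k_burling T a phi k &
          forall v, v \in S <-> in_top T phi v]) ->
  exists Ss : {set {set V}}, seqb a k [set: V] Ss S.
Proof.
move=> [W [T [phi [[[Hroot Hnon [h Hh]] [Hlast Hc0 Hc]] [[Hinj Harc] Hbound] HS]]]].
have Croot w := connect_root Hh w Hroot Hnon.
have [|Ss [HSs _]] := region_sequential Hh Hroot Hlast Hc0 Hc Hinj Harc (k := k) (r := None).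
  move=> s Hs; rewrite /vertices_on -card_codom_mem //; apply: Hbound.
  by case: s Hs => //= b t /andP[].
exists Ss; rewrite -(region_root phi Croot).
suff -> : S = region_top T phi None by [].
have topE := region_top_root phi Hh _ Croot.
by apply/setP => v; apply/idP/idP => [/HS/topE|/topE/HS].
Qed.

(* [seqb] hides the base forest and the graphs [H_v] under existentials at every
   level. To build one Burling tree we fix these witnesses once and for all as
   labels of the vertices: [owner x] is the vertex [v] one level up such that [x]
   lies in the base forest of [H_v] ([None] at the top level); [forest_rank],
   [forest_out] and [forest_sel] are the rank, the out-neighbour and the chosen
   set [R] of [x] in that forest; [sub_vertices] and [sub_family] describe [H_x]. *)
Record vlabel (V : finType) := VLabel {
  owner : option V;
  forest_rank : nat;
  level : nat;
  forest_out : option V;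
  forest_sel : {set V};
  sub_vertices : {set V};
  sub_family : {set {set V}} }.

Definition owned (V : finType) (L : V -> vlabel V) (X : {set V}) (c : option V) :=
  [set x in X | owner (L x) == c].

Fixpoint labelled (V : finType) (a : rel V) (L : V -> vlabel V) (k : nat)
    (X : {set V}) (c : option V) (Ss : {set {set V}}) : Prop :=
  match k with
  | 0 => X = set0 /\ Ss = [set set0]
  | k'.+1 =>
    let B := owned L X c in
    [/\ (forall u, u \in B -> [/\ forest_rank (L u) < #|V|, level (L u) = k',
           (forall w, forest_out (L u) = Some w ->
              w \in B /\ forest_rank (L w) < forest_rank (L u)) &
           (forall w, w \in B -> a u w = (forest_out (L u) == Some w))]),
        (forall v, v \in B -> [/\ sub_vertices (L v) \subset X, [disjoint sub_vertices (L v) & B] &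
              labelled a L k' (sub_vertices (L v)) (Some v) (sub_family (L v))]),
        (forall v w, v \in B -> w \in B -> v <> w ->
           [disjoint sub_vertices (L v) & sub_vertices (L w)]),
        (forall x, x \in X -> x \in B \/ exists2 v, v \in B & x \in sub_vertices (L v)) &
        [/\ (forall u w, u \in B -> w \in B -> a u w -> forest_sel (L u) \in sub_family (L w)),
           (forall u w y, u \in B -> w \in B -> y \in sub_vertices (L w) ->
              (a u y <-> a u w /\ y \in forest_sel (L u))),
           (forall u w y, u \in B -> w \in B -> y \in sub_vertices (L w) -> ~~ a y u),
           (forall v w x y, v \in B -> w \in B -> v <> w ->
              x \in sub_vertices (L v) -> y \in sub_vertices (L w) -> ~~ a x y) &
           Ss = set0 |: [set v |: R | v in B, R in sub_family (L v)]]]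
  end.

Lemma card_rank_lt (T : finType) (B : {set T}) (h : T -> nat) u w :
  w \in B -> h w < h u -> #|[set y in B | h y < h w]| < #|[set y in B | h y < h u]|.
Proof.
move=> Hw hwu; apply: proper_card; apply/properP; split.
  by apply/subsetP => y; rewrite !inE => /andP[-> hy]; exact: ltn_trans hy hwu.
by exists w; rewrite !inE ?Hw ?hwu ?ltnn.
Qed.

Lemma card_rank_max (T : finType) (B : {set T}) (h : T -> nat) u :
  u \in B -> #|[set y in B | h y < h u]| < #|T|.
Proof.
move=> Hu; apply: leq_trans (max_card B); apply: proper_card; apply/properP.
split; first by apply/subsetP => y; rewrite inE => /andP[].
by exists u; rewrite // inE ltnn andbF.
Qed.

Lemma glue_on_blocks (T : finType) (U : Type) (B : {set T}) (Xf : T -> {set T})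
    (f : T -> U) (g : T -> T -> U) :
  (forall v, v \in B -> [disjoint Xf v & B]) ->
  (forall v w, v \in B -> w \in B -> v <> w -> [disjoint Xf v & Xf w]) ->
  exists F : T -> U, {in B, F =1 f} /\ forall v x, v \in B -> x \in Xf v -> F x = g v x.
Proof.
move=> XB Xdisj; exists (fun x => if x \in B then f x else
  if [pick v in B | x \in Xf v] is Some v then g v x else f x).
split=> [u -> //|v x Hv Hx]; rewrite (disjointFr (XB v Hv) Hx).
case: pickP => [v' /andP[Hv' Hx']|none]; last by move: (none v); rewrite Hv Hx.
case: (eqVneq v' v) => [-> //|/eqP ne].
by move: (disjointFr (Xdisj v' v Hv' Hv ne) Hx'); rewrite Hx.
Qed.

Section Labelled.
Variables (V : finType) (a : rel V).

Lemma labelled_ext k (X : {set V}) c Ss (L L' : V -> vlabel V) :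
  {in X, L' =1 L} -> labelled a L k X c Ss -> labelled a L' k X c Ss.
Proof.
elim: k X c Ss L L' => [|k IH] X c Ss L L' E //=.
have EB : owned L' X c = owned L X c.
  by apply/setP => x; rewrite !inE; case: (boolP (x \in X)) => //= Hx; rewrite E.
have EL x : x \in owned L X c -> L' x = L x by rewrite inE => /andP[/E].
rewrite EB => -[H1 H2 H3 H4 [H5 H6 H7 H8 H9]]; split.
- move=> u Hu; rewrite EL //; have [h1 h2 h3 h4] := H1 u Hu; split=> //.
  by move=> w /h3 [Hw ?]; rewrite EL.
- move=> v Hv; rewrite EL //; have [h1 h2 h3] := H2 v Hv; split=> //.
  by apply: IH h3 => x Hx; apply: E; exact: (subsetP h1).
- by move=> v w Hv Hw; rewrite !EL //; exact: H3.
- by move=> x /H4 [|[v Hv Hx]]; [left | right; exists v; rewrite ?EL].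
split.
- by move=> u w Hu Hw; rewrite !EL //; exact: H5.
- by move=> u w y Hu Hw; rewrite !EL //; exact: H6.
- by move=> u w y Hu Hw; rewrite !EL //; exact: H7.
- by move=> v w x y Hv Hw; rewrite !EL //; exact: H8.
rewrite H9; congr (_ |: _); apply/setP => R.
by apply/imset2P/imset2P => -[v R' Hv HR' ->]; exists v R' => //; move: HR'; rewrite EL.
Qed.

Definition label0 : vlabel V := VLabel None 0 0 None set0 set0 set0.

(* The anchor [c] must lie outside [X] so that the vertices owned by [c] are
   exactly the base forest. *)
Lemma seqb_labelled k (X : {set V}) Ss B (c : option V) : seqb a k X Ss B ->
  (if c is Some w then w \notin X else true) ->
  exists L : V -> vlabel V, [/\ labelled a L k X c Ss, B = owned L X c &
    forall x, x \in X -> owner (L x) = c \/ exists2 y, owner (L x) = Some y & y \in X].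
Proof.
elim: k X Ss B c => [|k IH] X Ss B c.
  move=> [-> -> ->] _; exists (fun _ => label0); split=> //; last by move=> x; rewrite inE.
  by apply/setP => x; rewrite !inE.
move=> [Xf [Rf [Rs [[BX [p [h [Hp1 Hp2 Hp3]]] Hsub Hdisj] [Hcov [A1 A2 A3 A4] HSs]]]]] Hc.
have /fin_all_exists[Lv HLv] v : exists Lv : V -> vlabel V, v \in B ->
    labelled a Lv k (Xf v) (Some v) (Rf v) /\ forall x, x \in Xf v ->
      owner (Lv x) = Some v \/ exists2 y, owner (Lv x) = Some y & y \in Xf v.
  case: (boolP (v \in B)) => Hv; last by exists (fun _ => label0).
  have [_ Xd [Bv /(IH _ _ _ (Some v))]] := Hsub v Hv.
  by case/(_ (negbT (disjointFl Xd Hv))) => Lv [HL _ Hown]; exists Lv.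
pose rank x := #|[set y in B | h y < h x]|.
have [L [LB LX]] := glue_on_blocks
  (fun u => VLabel c (rank u) k (p u) (Rs u) (Xf u) (Rf u)) Lv
  (fun v Hv => let: And3 _ Xd _ := Hsub v Hv in Xd) Hdisj.
have own_out x : x \in X -> x \notin B -> exists2 y, owner (L x) = Some y & y \in X.
  move=> Hx nB; case: (Hcov x Hx) => [H|[v Hv Hxv]]; first by rewrite H in nB.
  have [Xs _ _] := Hsub v Hv.
  rewrite (LX v x Hv Hxv); case: ((HLv v Hv).2 x Hxv) => [->|[y -> Hy]].
    by exists v => //; exact: (subsetP BX).
  by exists y => //; exact: (subsetP Xs).
have EB : owned L X c = B.
  apply/setP => x; rewrite inE; case: (boolP (x \in X)) => Hx /=; last first.
    by apply/esym/negbTE/negP => /(subsetP BX); rewrite (negbTE Hx).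
  case: (boolP (x \in B)) => HxB; first by rewrite LB //= eqxx.
  have [y -> Hy] := own_out x Hx HxB; case: c Hc {LB} => [w Hw|] //.
  by apply/negbTE/eqP => -[e]; subst w; rewrite Hy in Hw.
exists L; split; last 2 first.
- by rewrite EB.
- by move=> x Hx; case: (boolP (x \in B)) => HxB; [left; rewrite LB | right; exact: own_out].
rewrite /= EB; split.
- move=> u Hu; rewrite LB //=; split=> //; first exact: card_rank_max.
  + move=> w Hw; have Bw := Hp2 u w Hu Hw; rewrite LB //=; split=> //.
    exact: card_rank_lt (Hp3 u w Hu Hw).
  + by move=> w Hw; apply/idP/eqP => /(Hp1 u w Hu Hw).
- move=> v Hv; rewrite LB //=; have [Xs Xd _] := Hsub v Hv; split=> //.
  by apply: labelled_ext (HLv v Hv).1 => x Hx; exact: LX.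
- by move=> v w Hv Hw; rewrite !LB //=; exact: Hdisj.
- by move=> x /Hcov [|[v Hv Hx]]; [left | right; exists v; rewrite ?LB].
split.
- by move=> u w Hu Hw; rewrite !LB //=; exact: A1.
- by move=> u w y Hu Hw; rewrite !LB //=; exact: A2.
- by move=> u w y Hu Hw; rewrite !LB //=; exact: A3.
- by move=> v w x y Hv Hw; rewrite !LB //=; exact: A4.
rewrite HSs; congr (_ |: _); apply/setP => R.
by apply/imset2P/imset2P => -[v R' Hv HR' ->]; exists v R' => //; move: HR'; rewrite LB.
Qed.

Lemma labelled_levels (L : V -> vlabel V) k (X : {set V}) c Ss : labelled a L k X c Ss ->
  forall x, x \in X ->
  [/\ forest_rank (L x) < #|V|, level (L x) < k, (owner (L x) = c -> level (L x) = k.-1) &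
      (owner (L x) = c \/ exists y, [/\ owner (L x) = Some y, y \in X &
                                         level (L x) < level (L y)])].
Proof.
elim: k X c Ss => [|k IH] X c Ss /=; first by move=> [-> _] x; rewrite inE.
move=> [H1 H2 H3 H4 _] x Hx.
case: (boolP (x \in owned L X c)) => HxB.
  have [h1 h2 _ _] := H1 x HxB; move: HxB; rewrite inE => /andP[_ /eqP e].
  by split=> //; [rewrite h2 | left].
have [v Hv Hxv] : exists2 v, v \in owned L X c & x \in sub_vertices (L v).
  by case: (H4 x Hx) => // H; rewrite H in HxB.
have [Xs _ Wv] := H2 v Hv.
have [p1 p2 p3 p4] := IH _ _ _ Wv x Hxv.
split=> //; first exact: ltnW p2.
  by move=> e; move: HxB; rewrite inE Hx e eqxx.
right; case: p4 => [e|[y [e Hy lt]]].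
  exists v; split=> //; first by move: Hv; rewrite inE => /andP[].
  by have [_ -> _ _] := H1 v Hv; rewrite (p3 e); lia.
by exists y; split=> //; exact: (subsetP Xs).
Qed.

End Labelled.

Definition lvertex (V : finType) : finType := (V + (option V * 'I_(#|V|).+2))%type.

Section SpineTree.
Variables (V : finType) (a : rel V) (L : V -> vlabel V).
Local Notation own x := (owner (L x)).
Local Notation rk x := (forest_rank (L x)).
Local Notation N := #|V|.

(* Every owner [c] has a spine [spine c N.+1, ..., spine c 0], each spine vertex
   being the last-born of the previous one; the spine of [None] starts at the
   root and that of [Some x] is the last-born of [x]. A vertex [x] is a child of
   [spine (owner x) (forest_rank x).+1], so that the branch from its last-born sibling
   [spine (owner x) (forest_rank x)] can run down the spine to the vertices of lower
   rank in the same base forest. *)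
Definition spine (c : option V) (n : nat) : lvertex V := inr (c, inord n).

Definition lpar (w : lvertex V) : option (lvertex V) :=
  match w with
  | inl x => Some (spine (own x) (rk x).+1)
  | inr (c, i) => if (i : nat) == N.+1 then (if c is Some x then Some (inl x) else None)
                  else Some (spine c (i : nat).+1)
  end.

Definition llast (w : lvertex V) : lvertex V :=
  match w with inl x => spine (Some x) N.+1 | inr (c, i) => spine c (i : nat).-1 end.

Definition lroot : lvertex V := spine None N.+1.

Definition ltree (cf : lvertex V -> {set lvertex V}) := BTree lroot lpar llast cf.

Local Notation ch := (child (ltree (fun _ => set0))).

Definition lvertices (s : seq (lvertex V)) := [set y | inl y \in s].

Lemma spine_child c i : 0 < i <= N.+1 -> ch (spine c i) (spine c i.-1).
Proof.
case: i => [|i] // /andP[_ iN]; rewrite /child /= inordK; last exact: (ltn_trans iN).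
by rewrite (_ : (i == N.+1) = false) //; apply/eqP; lia.
Qed.

Lemma vertex_child x : ch (spine (own x) (rk x).+1) (inl x).
Proof. exact: eqxx. Qed.

Lemma vertex_spine_child x : ch (inl x) (spine (Some x) N.+1).
Proof. by rewrite /child /= inordK // eqxx. Qed.

Fixpoint spine_seg c i m : seq (lvertex V) :=
  if m is m'.+1 then spine c i.-1 :: spine_seg c i.-1 m' else [::].

Lemma spine_seg_path c m i : m <= i -> i <= N.+1 ->
  path ch (spine c i) (spine_seg c i m) /\ last (spine c i) (spine_seg c i m) = spine c (i - m).
Proof.
elim: m i => [|m IH] [|i] //= Hm Hi; rewrite ?subn0 //.
have [P1 P2] := IH i Hm (ltnW Hi).
by rewrite (spine_child c (i := i.+1)) ?Hi // P1 P2 subSS.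
Qed.

Lemma spine_seg_inl c i m y : inl y \notin spine_seg c i m.
Proof. by elim: m i => [|m IH] i //=; rewrite inE IH. Qed.

Lemma inl_spine y c n : (inl y == spine c n) = false.
Proof. by []. Qed.

Hypothesis rank_small : forall x, rk x < N.

Lemma descent_path c i w t : own w = c -> rk w < i -> i <= N.+1 ->
  path ch (spine (Some w) N.+1) t ->
  path ch (spine c i) (spine_seg c i (i - (rk w).+1) ++ inl w :: spine (Some w) N.+1 :: t).
Proof.
move=> Ew Hr Hi Ht; have [P1 P2] := spine_seg_path c (leq_subr (rk w).+1 i) Hi.
by rewrite cat_path P1 P2 subKn // /= -Ew vertex_child vertex_spine_child Ht.
Qed.

Lemma descent_mem c i m w t y :
  (inl y \in spine_seg c i m ++ inl w :: spine (Some w) N.+1 :: t) = (y == w) || (inl y \in t).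
Proof.
rewrite mem_cat (negbTE (spine_seg_inl _ _ _ _)) /= !in_cons.
by congr (_ || _); apply/eqP/eqP => [[]|->].
Qed.

Lemma labelled_family_paths k X c Ss : labelled a L k X c Ss ->
  forall R, R \in Ss -> R \subset X /\
    exists t, path ch (spine c N.+1) t /\ lvertices (spine c N.+1 :: t) = R.
Proof.
have empty c' : exists t, path ch (spine c' N.+1) t /\ lvertices (spine c' N.+1 :: t) = set0.
  by exists [::]; split=> //; apply/setP => y; rewrite !inE.
elim: k X c Ss => [|k IH] X c Ss /=.
  by move=> [_ ->] R; rewrite inE => /eqP ->; split; [exact: sub0set | exact: empty].
move=> [_ H2 _ _ [_ _ _ _ ->]] R; rewrite in_setU1 => /orP[/eqP ->|].
  by split; [exact: sub0set | exact: empty].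
move=> /imset2P[v R' Hv HR' ->]; have [Xs _ Wv] := H2 v Hv.
have [Rsub [t [Pt Et]]] := IH _ _ _ Wv R' HR'.
move: Hv; rewrite inE => /andP[Xv /eqP Ev].
split.
  by apply/subsetP => y; rewrite in_setU1 => /orP[/eqP->|/(subsetP Rsub)/(subsetP Xs)] //.
exists (spine_seg c N.+1 (N.+1 - (rk v).+1) ++ inl v :: spine (Some v) N.+1 :: t); split.
  exact: descent_path Ev (leqW (rank_small v)) (leqnn _) Pt.
by apply/setP => y; rewrite -Et !inE descent_mem.
Qed.

Definition out_branch (X : {set V}) u s :=
  [/\ is_branch (ltree (fun _ => set0)) s,
      s = [::] \/ ohead s = Some (spine (own u) (rk u)) &
      forall y, (inl y \in s) = (y \in X) && a u y].

Lemma base_out_branch k X c Ss u : labelled a L k.+1 X c Ss -> u \in owned L X c ->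
  exists s, out_branch X u s.
Proof.
move=> [H1 H2 _ H4 [A1 A2 _ _ _]] HuB.
have [_ _ outP aP] := H1 u HuB; move: (HuB); rewrite inE => /andP[_ /eqP Eu].
case E: (forest_out (L u)) => [w|]; last first.
  exists [::]; split=> //; first by left.
  move=> y; apply/esym/negbTE/negP => /andP[Hy Ay].
  case: (H4 y Hy) => [HyB|[w Hw Hyw]]; first by move: Ay; rewrite aP // E.
  by have [+ _] := (A2 u w y HuB Hw Hyw).1 Ay; rewrite aP // E.
have [Hw rkw] := outP w E; have Auw : a u w by rewrite aP // E eqxx.
have [Xs _ Ww] := H2 w Hw; move: (Hw); rewrite inE => /andP[Xw /eqP Ew].
have [Rsub [t [Pt Et]]] := labelled_family_paths Ww (A1 u w HuB Hw Auw).
exists (spine c (rk u) :: spine_seg c (rk u) (rk u - (rk w).+1) ++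
        inl w :: spine (Some w) N.+1 :: t); split; [| by right; rewrite Eu |].
  by apply: descent_path Ew rkw _ Pt; exact: leqW (ltnW (rank_small u)).
move=> y; rewrite in_cons inl_spine descent_mem /=.
have -> : (inl y \in t) = (y \in forest_sel (L u)) by rewrite -Et !inE.
apply/idP/idP.
  move=> /orP[/eqP->|Hy]; first by rewrite Xw Auw.
  have Hyw := subsetP Rsub y Hy.
  by rewrite (subsetP Xs y Hyw) /=; apply/(A2 u w y HuB Hw Hyw).
move=> /andP[Hy Ay]; case: (H4 y Hy) => [HyB|[w' Hw' Hyw']].
  by move: Ay; rewrite aP // E => /eqP [->]; rewrite eqxx.
by have [_ ->] := (A2 u w' y HuB Hw' Hyw').1 Ay; rewrite orbT.
Qed.

Lemma labelled_out_branch k X c Ss : labelled a L k X c Ss ->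
  forall u, u \in X -> exists s, out_branch X u s.
Proof.
elim: k X c Ss => [|k IH] X c Ss; first by move=> [-> _] u; rewrite inE.
move=> HL u Hu; case: (boolP (u \in owned L X c)) => HuB; first exact: base_out_branch HL HuB.
have [_ H2 _ H4 [_ _ A3 A4 _]] := HL.
have [v Hv Huv] : exists2 v, v \in owned L X c & u \in sub_vertices (L v).
  by case: (H4 u Hu) => // H; rewrite H in HuB.
have [Xs _ Wv] := H2 v Hv; have [s [Bs Hs Ms]] := IH _ _ _ Wv u Huv.
exists s; split=> // y; rewrite Ms; apply/idP/idP.
  by move=> /andP[Hy ->]; rewrite (subsetP Xs y Hy).
move=> /andP[Hy Ay]; rewrite Ay andbT.
case: (H4 y Hy) => [HyB|[w Hw Hyw]]; first by move: (A3 y v u HyB Hv Huv); rewrite Ay.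
case: (eqVneq v w) => [-> //|/eqP ne].
by move: (A4 v w u y Hv Hw ne Huv Hyw); rewrite Ay.
Qed.

End SpineTree.

Section BurlingOfLabels.
Variables (V : finType) (a : rel V) (L : V -> vlabel V) (k : nat).
Local Notation own x := (owner (L x)).
Local Notation rk x := (forest_rank (L x)).
Local Notation lvl x := (level (L x)).
Local Notation N := #|V|.
Local Notation ch := (child (ltree L (fun _ => set0))).
Hypothesis rank_small : forall x, rk x < N.
Hypothesis level_small : forall x, lvl x < k.
Hypothesis level_owner : forall x y, own x = Some y -> lvl x < lvl y.

Definition is_vertex (w : lvertex V) : bool := if w is inl _ then true else false.

(* The tier strictly decreases at each vertex of G along a branch, which gives
   both the k-Burling bound and the rank function of the tree. *)
Definition tier (w : lvertex V) : nat :=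
  match w with inl x => lvl x | inr (None, _) => k | inr (Some x, _) => lvl x end.
Definition spine_pos (w : lvertex V) : nat :=
  match w with inl _ => 0 | inr (_, i) => N.+2 - i end.
Definition lheight (w : lvertex V) := (k - tier w) * N.+3 + spine_pos w.

Lemma tier_max w : tier w <= k.
Proof. by case: w => [x|[[x|] i]] //=; exact: ltnW. Qed.

Lemma lpar_tier w x : lpar L w = Some x -> tier w + is_vertex w <= tier x.
Proof.
case: w => [y|[c i]] /=.
  move=> [<-] /=; rewrite addn1.
  by case E: (own y) => [z|] /=; [exact: level_owner | exact: level_small].
case: ifP => _; last by move=> [<-]; case: c => [z|] /=; rewrite addn0.
by case: c => [z|] // [<-] /=; rewrite addn0.
Qed.

Lemma lpar_height w x : lpar L w = Some x -> lheight x < lheight w.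
Proof.
move=> E; have P := lpar_tier E; have Tx := tier_max x.
have pos_lt y : spine_pos y < N.+3 by case: y => [y|[c i]] //=; rewrite ltnS leq_subr.
have step (m n p q : nat) : m < n -> p < N.+3 -> m * N.+3 + p < n * N.+3 + q by nia.
rewrite /lheight; case: w E P => [y|[c i]] /= E P.
  by apply: step (pos_lt _); have := tier_max (inl y); rewrite /= addn1 in P *; lia.
move: E; case: ifP => [/eqP Ei|Ei].
  case: c P => [z|] // P [<-] /=; rewrite addn0 in P.
  by rewrite Ei subSnn addn0 addn1.
move=> [<-] /=; rewrite addn0 in P.
have Ii : i.+1 < N.+2 by rewrite ltnS ltn_neqAle (negbT Ei) -ltnS ltn_ord.
have lt : N.+2 - i.+1 < N.+2 - i by have := ltn_ord i; lia.
by rewrite inordK //; case: c P => [z|] P /=; rewrite ltn_add2l; exact: lt.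
Qed.

Lemma lroot_par : lpar L (lroot V) = None.
Proof. by rewrite /= inordK // eqxx. Qed.

Lemma lvertices_cons x t : #|lvertices (x :: t)| <= is_vertex x + #|lvertices t|.
Proof.
case: x => [y|z] /=.
  rewrite (_ : lvertices _ = y |: lvertices t) ?cardsU1; first by case: (_ \notin _).
  by apply/setP => x; rewrite !inE; congr (_ || _); apply/eqP/eqP => [[]|->].
by rewrite add0n; apply: subset_leq_card; apply/subsetP => x; rewrite !inE.
Qed.

Lemma path_lvertices x t : path ch x t -> #|lvertices (x :: t)| <= tier x + is_vertex x.
Proof.
elim: t x => [|y t IH] x /=.
  move=> _; apply: leq_trans (lvertices_cons x [::]) _.
  rewrite (_ : lvertices [::] = set0) ?cards0; last by apply/setP => z; rewrite !inE.
  by rewrite addn0 leq_addl.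
move=> /andP[/eqP Ey Hp]; apply: leq_trans (lvertices_cons x (y :: t)) _.
by have := IH y Hp; have := lpar_tier Ey; lia.
Qed.

Lemma path_tier_last x y t w :
  path ch x (y :: t) -> last x (y :: t) = inl w -> lvl w < tier x.
Proof.
elim: t x y => [|z t IH] x y /=.
  by rewrite andbT => /eqP Ey Ew; subst y; have := lpar_tier Ey; rewrite /= addn1.
move=> /andP[/eqP Ey Hp] Ew; have := IH y z Hp Ew; have := lpar_tier Ey; lia.
Qed.

Variable br : V -> seq (lvertex V).
Hypothesis br_spec : forall u, out_branch a L [set: V] u (br u).
Hypothesis level_top : forall x, own x = None -> lvl x = k.-1.

Definition lburling_c (w : lvertex V) : {set lvertex V} :=
  if w is inl x then [set z in br x] else set0.
Definition lburling := ltree L lburling_c.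

Lemma lpar_nonroot w : w <> lroot V -> lpar L w <> None.
Proof.
case: w => [x|[c i]] //= ne; case: ifP => // /eqP Ei; case: c ne => // ne.
by case: ne; congr inr; congr pair; apply: val_inj; rewrite /= inordK.
Qed.

Lemma lburling_is_burling : is_burling_tree lburling.
Proof.
split.
  by split; [exact: lroot_par | exact: lpar_nonroot | exists lheight; exact: lpar_height].
split.
- case=> [x|[c i]] /= [w Ew]; first by rewrite inordK // eqxx.
  have Hi : 0 < i.
    case: w Ew => [y|[c' i']] /=.
      by move=> [_ <-]; rewrite inordK //; exact: leqW (rank_small y).
    case: ifP => [_|Ei]; first by case: c'.
    by move=> [_ <-]; rewrite inordK // ltnS ltn_neqAle (negbT Ei) -ltnS ltn_ord.
  rewrite /spine inordK; last exact: leq_ltn_trans (leq_pred i) (ltn_ord i).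
  rewrite (_ : (i.-1 == N.+1) = false); last first.
    by apply/negbTE; rewrite neq_ltn prednK // -ltnS ltn_ord.
  by rewrite prednK //; congr (Some (inr (c, _))); apply: val_inj; rewrite /= inordK.
- by case=> [x|[c i]] //= [|[p [_ Ep]]] //; move: Ep; case: p => [y|[c' i']].
- case=> [x|[c i]] p /=; last first.
    by move=> _ _; exists [::]; split; [|left|apply/setP => z; rewrite !inE].
  move=> [<-] ne; have [B1 B2 _] := br_spec x; exists (br x); split=> //.
  by move: B2; rewrite /= inordK //; exact: leqW (rank_small x).
Qed.

Lemma lburling_k_burling : k_burling lburling a inl k.
Proof.
split; first split=> [x y [] //|u v].
  by rewrite /= inE; have [_ _ ->] := br_spec u; rewrite in_setT.
case=> [|x t] /=.
  move=> _; apply: (@leq_trans 0) => //.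
  by rewrite leqn0 cards_eq0; apply/eqP/setP => z; rewrite !inE.
move=> Hp; rewrite card_codom_mem; last by move=> ? ? [].
apply: leq_trans (path_lvertices Hp) _.
by case: x {Hp} => [y|[[y|] i]] /=; rewrite ?addn0 ?addn1 //; exact: ltnW.
Qed.

Lemma lburling_top v : own v = None <-> in_top lburling inl v.
Proof.
have Croot w : connect (child lburling) (bt_root lburling) w.
  exact: (@connect_root _ lburling _ lpar_height w lroot_par lpar_nonroot).
split.
- move=> Ev t Hp El u Hu.
  have [t1 [t2 [Es Hp2 _]]] := path_split_at Hp Hu.
  have Elast : last (inl u) t2 = inl v.
    by rewrite -El -[last _ t]/(last (inl u) (_ :: t)) Es last_cat.
  case: t2 Hp2 Elast {Es} => [|y t2] Hp2 Elast; first by case: Elast.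
  by have := path_tier_last Hp2 Elast; rewrite /= (level_top Ev); have := level_small u; lia.
move=> Ht; case E: (own v) => [x|] //; exfalso.
have /connectP [t Hp El] := Croot (inl v).
pose s := spine (Some x) N.+1 :: spine_seg (Some x) N.+1 (N.+1 - (rk v).+1) ++ [:: inl v].
have Ps : path ch (inl x) s.
  have [P1 P2] := spine_seg_path L (Some x) (leq_subr (rk v).+1 N.+1) (leqnn _).
  rewrite /= vertex_spine_child cat_path P1 P2 subKn /= ?andbT; last exact: leqW (rank_small v).
  by rewrite -E vertex_child.
have Cxv : connect (child lburling) (inl x) (last (bt_root lburling) t).
  by rewrite -El; apply/connectP; exists s => //; rewrite /s /= last_cat.
case: (path_ancestor Hp (mem_last _ _) Cxv) => [H|H].
  by have e := Ht t Hp (esym El) x H; subst x; have := level_owner E; rewrite ltnn.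
by have := @connect_anti _ lburling _ lpar_height _ _ H (Croot _).
Qed.

End BurlingOfLabels.

Lemma sequential_burling k (V : finType) (a : rel V) (S : {set V}) :
  (exists Ss : {set {set V}}, seqb a k [set: V] Ss S) ->
  exists (W : finType) (T : btree W) (phi : V -> W),
    [/\ is_burling_tree T, k_burling T a phi k & forall v, v \in S <-> in_top T phi v].
Proof.
move=> [Ss HS]; have [L [HL ES _]] := seqb_labelled (c := None) HS isT.
have levels x := labelled_levels HL (in_setT x).
have rank_small x : forest_rank (L x) < #|V| by have [] := levels x.
have level_small x : level (L x) < k by have [] := levels x.
have level_top x : owner (L x) = None -> level (L x) = k.-1 by have [] := levels x.
have level_owner x y : owner (L x) = Some y -> level (L x) < level (L y).
  move=> E; have [_ _ _ [|[y' [E' _ lt]]]] := levels x; first by rewrite E.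
  by move: E'; rewrite E => -[->].
have /fin_all_exists[br br_spec] u := labelled_out_branch rank_small HL (in_setT u).
exists (lvertex V), (lburling L br), inl; split.
- exact: lburling_is_burling.
- exact: lburling_k_burling.
move=> v; rewrite ES inE in_setT -(lburling_top rank_small level_small level_owner br level_top).
by split=> /eqP.
Qed.

Theorem lemma4p4 (k : nat) (V : finType) (a : rel V) (S : {set V}) :
  oriented a ->
  (exists (W : finType) (T : btree W) (phi : V -> W),
      [/\ is_burling_tree T, k_burling T a phi k &
          forall v, v \in S <-> in_top T phi v])
  <->
  (exists Ss : {set {set V}}, seqb a k [set: V] Ss S).
Proof. by move=> _; split; [exact: burling_sequential | exact: sequential_burling]. Qed.
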